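(* Let $\mathbb{T}$ be a time scale and $\alpha\in(0,1]$. Let $f:\mathbb{R}\to\mathbb{R}$ be continuously differentiable and let $g:\mathbb{T}\to\mathbb{R}$ be continuous on $\mathbb{T}^k$. If $g$ is nabla fractional differentiable of order $\alpha$ at a left-dense point $t\in\mathbb{T}^k$, then $\nabla^{(\alpha)}(f\circ g)(t)=f'(g(t))\cdot\nabla^{(\alpha)}g(t)$.
   Context: A time scale $\mathbb{T}$ is a nonempty closed subset of $\mathbb{R}$ with the relative topology. For $t\in\mathbb{T}$: $\rho(t)=\sup\{s\in\mathbb{T}:s<t\}$, $\sigma(t)=\inf\{s\in\mathbb{T}:s>t\}$; $t$ is left-dense if $\rho(t)=t$. If $\mathbb{T}$ has a minimum $m$ with $\sigma(m)>m$ then $\mathbb{T}^k=\mathbb{T}\setminus\{m\}$, else $\mathbb{T}^k=\mathbb{T}$. $U_\delta(t)=(t-\delta,t+\delta)\cap\mathbb{T}$, $U^-_\delta(t)=(t-\delta,t)\cap\mathbb{T}$. Let $Q=\{1/q: q \text{ an odd positive integer}\}$; for $\alpha\in Q$, $x^\alpha$ is the real $q$-th root. Definition: $h:\mathbb{T}\to\mathbb{R}$ is nabla fractional differentiable of order $\alpha$ at $t\in\mathbb{T}^k$ if there is $L\in\mathbb{R}$ such that for every $\varepsilon>0$ there is $\delta>0$ with $|[h(\rho(t))-h(s)]-L[\rho(t)-s]^\alpha|\le\varepsilon|\rho(t)-s|^\alpha$ for all $s\in U_\delta(t)$ if $\alpha\in Q$, resp. all $s\in U^-_\delta(t)$ if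 $\alpha\notin Q$; then $\nabla^{(\alpha)}h(t):=L$. *)

From Stdlib Require Import Reals Lra.
From Coquelicot Require Import Coquelicot.
Open Scope R_scope.

Definition is_time_scale (T : R -> Prop) : Prop :=
  (exists x, T x) /\
  (forall x, (forall eps, 0 < eps -> exists y, T y /\ Rabs (y - x) < eps) -> T x).

(* rho(t) = sup {s in T | s < t}, with the convention sup emptyset = t. *)
Definition rho (T : R -> Prop) (t : R) : R :=
  match Lub_Rbar (fun s => T s /\ s < t) with
  | Finite r => r
  | _ => t
  end.

(* sigma(t) = inf {s in T | s > t}, with the convention inf emptyset = t. *)
Definition sigma (T : R -> Prop) (t : R) : R :=
  match Glb_Rbar (fun s => T s /\ t < s) with
  | Finite r => r
  | _ => t
  end.

Definition left_dense (T : R -> Prop) (t : R) : Prop := rho T t = t.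

(* T^k : remove the minimum m of T if sigma(m) > m. *)
Definition Tk (T : R -> Prop) (t : R) : Prop :=
  T t /\ ~ ((forall s, T s -> t <= s) /\ t < sigma T t).

Definition inQ (alpha : R) : Prop :=
  exists q : nat, Nat.Odd q /\ alpha = / INR q.

(* x^alpha: for x > 0 the usual power; for x < 0 (only used when alpha in Q)
   the real odd root, i.e. -((-x)^alpha); 0^alpha = 0. *)
Definition fpow (alpha x : R) : R :=
  if Rlt_dec 0 x then Rpower x alpha
  else if Rlt_dec x 0 then - Rpower (- x) alpha
  else 0.

Definition nabla_frac_deriv (T : R -> Prop) (alpha : R) (h : R -> R) (t L : R) : Prop :=
  Tk T t /\
  forall eps, 0 < eps -> exists delta, 0 < delta /\
    forall s, T s -> t - delta < s -> s < t + delta -> (inQ alpha \/ s < t) ->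
      Rabs ((h (rho T t) - h s) - L * fpow alpha (rho T t - s))
        <= eps * fpow alpha (Rabs (rho T t - s)).

Definition nabla_frac_differentiable (T : R -> Prop) (alpha : R) (h : R -> R) (t : R) : Prop :=
  exists L, nabla_frac_deriv T alpha h t L.

Definition continuous_on_Tk (T : R -> Prop) (g : R -> R) : Prop :=
  forall t, Tk T t -> forall eps, 0 < eps -> exists delta, 0 < delta /\
    forall s, T s -> Rabs (s - t) < delta -> Rabs (g s - g t) < eps.

From Stdlib Require Import Reals Lra.
From Coquelicot Require Import Coquelicot.
Open Scope R_scope.

(* At a left-dense point rho t = t, so the fractional derivative says
   g t - g s = L (t - s)^alpha + o(|t - s|^alpha) as s tends to t through the
   admissible points.  Differentiability of f gives
   f (g t) - f (g s) = f'(g t) (g t - g s) + o(|g t - g s|), continuity of g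
   makes g s tend to g t, and |(t - s)^alpha| <= |t - s|^alpha shows that
   |g t - g s| = O(|t - s|^alpha); hence the second error term is also
   o(|t - s|^alpha). *)

Lemma fpow_abs (alpha x : R) : Rabs (fpow alpha x) <= fpow alpha (Rabs x).
Proof.
  unfold fpow, Rpower.
  destruct (Rlt_dec 0 x) as [Hx|Hx].
  - rewrite (Rabs_right x) by lra.
    destruct (Rlt_dec 0 x); [|lra].
    rewrite Rabs_right; [lra|left; apply exp_pos].
  - destruct (Rlt_dec x 0) as [Hx'|Hx'].
    + rewrite (Rabs_left x) by lra.
      destruct (Rlt_dec 0 (- x)); [|lra].
      rewrite Rabs_Ropp, Rabs_right; [lra|left; apply exp_pos].
    + replace x with 0 by lra.
      rewrite Rabs_R0.
      destruct (Rlt_dec 0 0); [lra|].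
      destruct (Rlt_dec 0 0); lra.
Qed.

Lemma is_derive_remainder (f : R -> R) (y D : R) :
  is_derive f y D ->
  forall eps : posreal,
    locally y (fun z => Rabs (f z - f y - D * (z - y)) <= eps * Rabs (z - y)).
Proof.
  intros [_ Hdomin] eps.
  apply filter_imp with (2 := Hdomin y (fun P HP => HP) eps).
  intros z Hz.
  change (Rabs (f z - f y - (z - y) * D) <= eps * Rabs (z - y)) in Hz.
  now rewrite Rmult_comm.
Qed.

Lemma chain_remainder_le (df dg D L P A e : R) :
  0 <= e ->
  Rabs P <= A ->
  Rabs (df - D * dg) <= e * Rabs dg ->
  Rabs (dg - L * P) <= e * A ->
  Rabs (df - D * L * P) <= e * (Rabs L + Rabs D + e) * A.
Proof.
  intros He HPA Hdf Hdg.
  assert (Hdg_le : Rabs dg <= (e + Rabs L) * A).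
  { replace dg with ((dg - L * P) + L * P) by ring.
    eapply Rle_trans; [apply Rabs_triang|].
    rewrite Rabs_mult.
    assert (Rabs L * Rabs P <= Rabs L * A)
      by (apply Rmult_le_compat_l; [apply Rabs_pos|exact HPA]).
    lra. }
  replace (df - D * L * P) with ((df - D * dg) + D * (dg - L * P)) by ring.
  eapply Rle_trans; [apply Rabs_triang|].
  rewrite Rabs_mult.
  assert (e * Rabs dg <= e * ((e + Rabs L) * A))
    by (apply Rmult_le_compat_l; assumption).
  assert (Rabs D * Rabs (dg - L * P) <= Rabs D * (e * A))
    by (apply Rmult_le_compat_l; [apply Rabs_pos|exact Hdg]).
  nra.
Qed.

Definition is_lin_approx {X : Type} (F : (X -> Prop) -> Prop)
  (P A : X -> R) (d : X -> R) (L : R) : Prop :=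
  forall eps : posreal, F (fun x => Rabs (d x - L * P x) <= eps * A x).

Lemma is_lin_approx_comp {X : Type} (F : (X -> Prop) -> Prop) {FF : Filter F}
    (f : R -> R) (u P A : X -> R) (y D L : R) :
  is_derive f y D ->
  filterlim u F (locally y) ->
  (forall x, Rabs (P x) <= A x) ->
  is_lin_approx F P A (fun x => y - u x) L ->
  is_lin_approx F P A (fun x => f y - f (u x)) (D * L).
Proof.
  intros Hf Hu HPA Hu_approx eps.
  set (c := Rabs L + Rabs D + 1).
  assert (Hc : 0 < c)
    by (unfold c; pose proof (Rabs_pos L); pose proof (Rabs_pos D); lra).
  assert (He : 0 < Rmin 1 (eps / c))
    by (apply Rmin_pos; [lra|apply Rdiv_lt_0_compat; [apply cond_pos|exact Hc]]).
  set (e := mkposreal _ He).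
  assert (He_le : e * (Rabs L + Rabs D + e) <= eps).
  { assert (He1 : e <= 1) by apply Rmin_l.
    assert (Hec : e <= eps / c) by apply Rmin_r.
    apply Rle_trans with (e * c).
    - apply Rmult_le_compat_l; [left; apply cond_pos|unfold c; lra].
    - apply Rmult_le_compat_r with (r := c) in Hec; [|lra].
      now replace (eps / c * c) with (pos eps) in Hec by (field; lra). }
  assert (Hf_near : F (fun x =>
    Rabs (f (u x) - f y - D * (u x - y)) <= e * Rabs (u x - y)))
    by exact (Hu _ (is_derive_remainder f y D Hf e)).
  generalize (filter_and _ _ Hf_near (Hu_approx e)).
  apply filter_imp; intros x [Hfx Hux].
  assert (HA : 0 <= A x) by (pose proof (Rabs_pos (P x)); specialize (HPA x); lra).
  eapply Rle_trans.
  - apply chain_remainder_le with (dg := y - u x); [left; apply cond_pos|apply HPA| |exact Hux].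
    replace (f y - f (u x) - D * (y - u x))
      with (- (f (u x) - f y - D * (u x - y))) by ring.
    now rewrite Rabs_Ropp, (Rabs_minus_sym y).
  - apply Rmult_le_compat_r; [exact HA|exact He_le].
Qed.

Definition nabla_nbhs (T : R -> Prop) (alpha t : R) : (R -> Prop) -> Prop :=
  within (fun s => T s /\ (inQ alpha \/ s < t)) (locally t).

Lemma nabla_frac_derivE (T : R -> Prop) (alpha : R) (h : R -> R) (t L : R) :
  nabla_frac_deriv T alpha h t L <->
  Tk T t /\
  is_lin_approx (nabla_nbhs T alpha t)
    (fun s => fpow alpha (rho T t - s)) (fun s => fpow alpha (Rabs (rho T t - s)))
    (fun s => h (rho T t) - h s) L.
Proof.
  split; intros [Ht Happrox]; split; try exact Ht.
  - intros eps.
    destruct (Happrox eps (cond_pos eps)) as [delta [Hdelta Hnear]].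
    exists (mkposreal delta Hdelta); intros s Hs [HTs Hadm].
    change (Rabs (s - t) < delta) in Hs; apply Rabs_def2 in Hs.
    apply Hnear; [exact HTs|lra|lra|exact Hadm].
  - intros eps Heps.
    destruct (Happrox (mkposreal eps Heps)) as [delta Hnear].
    exists delta; split; [apply cond_pos|].
    intros s HTs Hlo Hhi Hadm.
    apply Hnear; [|split; assumption].
    change (Rabs (s - t) < delta); apply Rabs_def1; lra.
Qed.

Lemma continuous_on_Tk_nabla_lim (T : R -> Prop) (alpha : R) (g : R -> R) (t : R) :
  continuous_on_Tk T g -> Tk T t ->
  filterlim g (nabla_nbhs T alpha t) (locally (g t)).
Proof.
  intros Hg Ht P [eps HP].
  destruct (Hg t Ht eps (cond_pos eps)) as [delta [Hdelta Hnear]].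
  exists (mkposreal delta Hdelta); intros s Hs [HTs _].
  exact (HP (g s) (Hnear s HTs Hs)).
Qed.

Theorem mainTheorem7 (T : R -> Prop) (alpha : R) (f g : R -> R) (t L : R) :
  is_time_scale T ->
  0 < alpha <= 1 ->
  (forall x, ex_derive f x) ->
  (forall x, continuous (Derive f) x) ->
  continuous_on_Tk T g ->
  Tk T t ->
  left_dense T t ->
  nabla_frac_deriv T alpha g t L ->
  nabla_frac_deriv T alpha (fun x => f (g x)) t (Derive f (g t) * L).
Proof.
  intros _ _ Hf _ Hg_cont Ht Hdense Hg.
  apply nabla_frac_derivE in Hg as [_ Hg_approx].
  apply nabla_frac_derivE; split; [exact Ht|].
  unfold left_dense in Hdense; rewrite Hdense in *.
  apply (is_lin_approx_comp _ f g).
  - exact (Derive_correct f (g t) (Hf (g t))).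
  - exact (continuous_on_Tk_nabla_lim T alpha g t Hg_cont Ht).
  - intros s; apply fpow_abs.
  - exact Hg_approx.
Qed.
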